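(* Assume $FCA$. Then there is an entangled set of reals.
   Context: For $k\in\omega$, $t:k\to\{>,<\}$ and disjoint $a=\{a_0<\dots<a_{k-1}\}$, $b=\{b_0<\dots<b_{k-1}\}$ in $[\mathbb R]^k$ (increasing enumerations), $(a,b)$ realizes $t$ if $a_i\ t(i)\ b_i$ for every $i<k$. An uncountable $\mathcal E\subseteq\mathbb R$ is $k$-entangled if for every uncountable family $\mathcal A\subseteq[\mathcal E]^k$ of pairwise disjoint sets and every $t:k\to\{>,<\}$ there are $a\neq b$ in $\mathcal A$ such that $(a,b)$ realizes $t$; it is entangled if it is $k$-entangled for every $k\in\omega$. A type is a sequence $\tau=\{(m_k,n_{k+1},r_{k+1})\}_{k\in\omega}$ of natural numbers with $m_0=1$; $n_k\ge2$ for $k\ge1$; every $r\in\omega$ equals $r_k$ for infinitely many $k$; $m_k>r_{k+1}$; and $m_{k+1}=r_{k+1}+(m_k-r_{k+1})n_{k+1}$ for all $k$. For a set of ordinals $X$ and $\mathcal F\subseteq[X]^{<\omega}$, $\mathcal F_k$ is the set of elements of rank $k$ in $(\mathcal F,\subsetneq)$; $A\sqsubseteq B$ means $A\subseteq B$ and every element of $B$ below an element of $A$ is in $A$; $A<B$ means every element of $A$ is below every element of $B$. $\mathcal F$ is a construction scheme over $X$ of type $\tau$ if (1) every finite subset of $X$ lies in a member of $\mathcal F$; (2) $|F|=m_k$ for $F\in\mathcal F_k$; (3) $E\cap F\sqsubseteq E,F$ for $E,F\in\mathcal F_k$; (4) each $F\in\mathcal F_{k+1}$ is the union of uniquely determined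 $F_0,\dots,F_{n_{k+1}-1}\in\mathcal F_k$ forming a $\Delta$-system with root $R(F)$, $|R(F)|=r_{k+1}$, $R(F)<F_0\setminus R(F)<\dots<F_{n_{k+1}-1}\setminus R(F)$. For a construction scheme $\mathcal F$ over $\omega_1$, $l\ge1$, $F\in\mathcal F_l$ and finite $\mathcal C\subseteq[\omega_1]^{<\omega}$: $F$ fully captures $\mathcal C$ if $|\mathcal C|=n_l$ and $\mathcal C$ can be enumerated as $\{c_i\}_{i<n_l}$ with $c_i\subseteq F_i$, $c_i\setminus R(F)\neq\emptyset$ and $\phi_i[c_0]=c_i$ where $\phi_i:F_0\to F_i$ is the increasing bijection. $\mathcal F$ is fully capturing if for every uncountable $S\subseteq[\omega_1]^{<\omega}$ and every $k\in\omega$ there are a finite $\mathcal C\subseteq S$, $l>k$ and $F\in\mathcal F_l$ fully capturing $\mathcal C$. $FCA$ is the statement: for every type $\tau$ there is a fully capturing construction scheme over $\omega_1$ of type $\tau$. *)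

(* concrete reals R; finite sets represented by strictly
   increasing lists (their increasing enumerations). *)
From Stdlib Require Import Reals List Sorting.Sorted Arith.
Import ListNotations.
Set Implicit Arguments.

Definition countable_pred {T : Type} (P : T -> Prop) : Prop :=
  exists f : T -> nat, forall x y, P x -> P y -> f x = f y -> x = y.

Definition is_omega1 (W : Type) (lt : W -> W -> Prop) : Prop :=
  (forall x, ~ lt x x) /\
  (forall x y z, lt x y -> lt y z -> lt x z) /\
  (forall x y, lt x y \/ x = y \/ lt y x) /\
  well_founded lt /\
  ~ countable_pred (fun _ : W => True) /\
  (forall x, countable_pred (fun y => lt y x)).

(* Types tau = ((m_k, n_{k+1}, r_{k+1}))_k, given by three sequences;
   n 0 and r 0 are irrelevant. *)
Definition is_type (m n r : nat -> nat) : Prop :=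
  m 0 = 1 /\
  (forall k, 1 <= k -> 2 <= n k) /\
  (forall v N, exists k, N < k /\ r k = v) /\
  (forall k, r (S k) < m k) /\
  (forall k, m (S k) = r (S k) + (m k - r (S k)) * n (S k)).

Section FiniteSets.
Variable W : Type.
Variable lt : W -> W -> Prop.

Definition ssub (A B : list W) : Prop := incl A B /\ ~ incl B A.

Definition chain_below (Fam : list W -> Prop) (A : list W) (k : nat) : Prop :=
  exists c : nat -> list W,
    (forall i, i < k -> Fam (c i)) /\
    (forall i, S i < k -> ssub (c i) (c (S i))) /\
    (forall i, i < k -> ssub (c i) A).

Definition rank (Fam : list W -> Prop) (A : list W) (k : nat) : Prop :=
  Fam A /\ chain_below Fam A k /\ ~ chain_below Fam A (S k).

Definition cap_initial (E F : list W) : Prop :=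
  (forall x y, In x E -> In x F -> In y E -> lt y x -> In y F) /\
  (forall x y, In x E -> In x F -> In y F -> lt y x -> In y E).

Definition decomposition (Fam : list W -> Prop) (n r : nat -> nat) (k : nat)
    (F : list W) (Fs : nat -> list W) (R : list W) : Prop :=
  (forall i, i < n (S k) -> rank Fam (Fs i) k) /\
  (forall x, In x F <-> exists i, i < n (S k) /\ In x (Fs i)) /\
  (forall i j, i < n (S k) -> j < n (S k) -> i <> j ->
     forall x, (In x (Fs i) /\ In x (Fs j)) <-> In x R) /\
  Sorted lt R /\ length R = r (S k) /\
  (forall x y, In x R -> In y (Fs 0) -> ~ In y R -> lt x y) /\
  (forall i, S i < n (S k) -> forall x y,
     In x (Fs i) -> ~ In x R -> In y (Fs (S i)) -> ~ In y R -> lt x y).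

Definition construction_scheme (Fam : list W -> Prop) (m n r : nat -> nat) : Prop :=
  (forall A, Fam A -> Sorted lt A) /\
  (forall l : list W, exists A, Fam A /\ incl l A) /\
  (forall k A, rank Fam A k -> length A = m k) /\
  (forall k E F, rank Fam E k -> rank Fam F k -> cap_initial E F) /\
  (forall k F, rank Fam F (S k) ->
     exists Fs R, decomposition Fam n r k F Fs R /\
       (forall Gs R', decomposition Fam n r k F Gs R' ->
          forall i, i < n (S k) -> Gs i = Fs i)).

(* F in Fam_{k+1} fully captures C = {cs 0, ..., cs (n_{k+1}-1)}
   (the cs i pairwise distinct). The increasing bijection
   phi_i : Fs 0 -> Fs i sends the j-th element of Fs 0 to the j-th of Fs i. *)
Definition fully_captures (Fam : list W -> Prop) (n r : nat -> nat) (k : nat)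
    (F : list W) (cs : nat -> list W) : Prop :=
  (forall i j, i < n (S k) -> j < n (S k) -> cs i = cs j -> i = j) /\
  exists Fs R, decomposition Fam n r k F Fs R /\
    (forall i, i < n (S k) -> incl (cs i) (Fs i)) /\
    (forall i, i < n (S k) -> exists x, In x (cs i) /\ ~ In x R) /\
    (forall i j x y, i < n (S k) ->
       nth_error (Fs 0) j = Some x -> nth_error (Fs i) j = Some y ->
       (In x (cs 0) <-> In y (cs i))).

Definition fully_capturing (Fam : list W -> Prop) (n r : nat -> nat) : Prop :=
  forall Sf : list W -> Prop,
    (forall A, Sf A -> Sorted lt A) -> ~ countable_pred Sf ->
    forall k, exists l cs F,
      k <= l /\ (* l+1 > k *)
      (forall i, i < n (S l) -> Sf (cs i)) /\
      rank Fam F (S l) /\ fully_captures Fam n r l F cs.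

Definition FCA : Prop :=
  forall m n r : nat -> nat, is_type m n r ->
    exists Fam : list W -> Prop,
      construction_scheme Fam m n r /\ fully_capturing Fam n r.

End FiniteSets.

(* Entangled sets of reals. k-subsets of reals = strictly increasing
   lists of length k (their increasing enumerations). *)
Definition realizes (k : nat) (t : nat -> bool) (a b : list R) : Prop :=
  forall i x y, i < k -> nth_error a i = Some x -> nth_error b i = Some y ->
    if t i then Rgt x y else Rlt x y.

Definition k_entangled (E : R -> Prop) (k : nat) : Prop :=
  forall A : list R -> Prop,
    (forall a, A a -> length a = k /\ Sorted Rlt a /\ (forall x, In x a -> E x)) ->
    (forall a b, A a -> A b -> a <> b -> forall x, In x a -> ~ In x b) ->
    ~ countable_pred A ->
    forall t : nat -> bool, exists a b, A a /\ A b /\ a <> b /\ realizes k t a b.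

Definition entangled (E : R -> Prop) : Prop :=
  ~ countable_pred E /\ forall k, k_entangled E k.

From Stdlib Require Import Reals List Sorting.Sorted.
From Stdlib Require Import Arith Wf_nat Lia Lra Bool Classical ClassicalEpsilon.
Import ListNotations.

(* Take the type with n_(k+1) = 2 ^ m_k and code each element of omega_1 by a
   real number written in mixed radix, whose digit at level k is the position of
   the element in the rank-k sets of the scheme, enlarged by one bit: if the
   element sits at position j of the block F_i of a rank-(k+1) set F, the bit is
   bit j of i.  Elements at the same position of two rank-l sets share their
   first l digits, so the codes are ordered alike on all rank-l sets, while
   elements at the same position j >= |R(F)| of two blocks F_i, F_i' are
   compared by bit j of i and i'.  Given an uncountable family of pairwise
   disjoint k-sets of codes and a type t, full capturing yields a rank-(l+1) set
   whose blocks F_i contain copies c_i of one pattern of positions; block indices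
   i1, i2 whose bits at these positions spell t and its complement give codes of
   c_i1, c_i2 realizing t (positions in the root are excluded by disjointness). *)

Definition same_elements {T : Type} (a b : list T) : Prop := forall x, In x a <-> In x b.

Section StronglySortedLists.
Context {T : Type} {lt : T -> T -> Prop}.
Hypothesis lt_irrefl : forall x, ~ lt x x.
Hypothesis lt_trans : forall {x y z}, lt x y -> lt y z -> lt x z.

Lemma StronglySorted_head_lt {h t x} : StronglySorted lt (h :: t) -> In x t -> lt h x.
Proof. intros Hs Hx. apply StronglySorted_inv in Hs as [_ Hs]. now apply (proj1 (Forall_forall _ _) Hs). Qed.

Lemma StronglySorted_head_notin {h t} : StronglySorted lt (h :: t) -> ~ In h t.
Proof. intros Hs Hh. exact (lt_irrefl h (StronglySorted_head_lt Hs Hh)). Qed.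

Lemma StronglySorted_NoDup {l} : StronglySorted lt l -> NoDup l.
Proof.
  induction l as [|h t IH]; intro Hs; constructor.
  - exact (StronglySorted_head_notin Hs).
  - exact (IH (proj1 (StronglySorted_inv Hs))).
Qed.

Lemma StronglySorted_heads_eq h1 t1 h2 t2 :
  StronglySorted lt (h1 :: t1) -> StronglySorted lt (h2 :: t2) ->
  In h1 (h2 :: t2) -> In h2 (h1 :: t1) -> h1 = h2.
Proof.
  intros S1 S2 [e|I1] [e'|I2]; auto.
  destruct (lt_irrefl h1 (lt_trans (StronglySorted_head_lt S1 I2) (StronglySorted_head_lt S2 I1))).
Qed.

Lemma StronglySorted_tails_iff {h t1 t2 x} :
  StronglySorted lt (h :: t1) -> StronglySorted lt (h :: t2) ->
  (In x (h :: t1) <-> In x (h :: t2)) -> (In x t1 <-> In x t2).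
Proof.
  intros S1 S2 E; split; intro Hx.
  - destruct (proj1 E (or_intror Hx)) as [<-|]; [destruct (StronglySorted_head_notin S1 Hx)|auto].
  - destruct (proj2 E (or_intror Hx)) as [<-|]; [destruct (StronglySorted_head_notin S2 Hx)|auto].
Qed.

Lemma StronglySorted_ext {l1 l2} :
  StronglySorted lt l1 -> StronglySorted lt l2 -> same_elements l1 l2 -> l1 = l2.
Proof.
  revert l2; induction l1 as [|h1 t1 IH]; intros [|h2 t2] S1 S2 E.
  - reflexivity.
  - destruct (proj2 (E h2) (or_introl eq_refl)).
  - destruct (proj1 (E h1) (or_introl eq_refl)).
  - assert (h1 = h2) as <-.
    { apply StronglySorted_heads_eq with t1 t2; auto; apply E; now left. }
    f_equal. apply IH; [exact (proj1 (StronglySorted_inv S1))|exact (proj1 (StronglySorted_inv S2))|].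
    intro x. exact (StronglySorted_tails_iff S1 S2 (E x)).
Qed.

Lemma StronglySorted_position_unique {l1 l2 p1 p2 a} :
  StronglySorted lt l1 -> StronglySorted lt l2 ->
  nth_error l1 p1 = Some a -> nth_error l2 p2 = Some a ->
  (forall y, lt y a -> In y l1 <-> In y l2) -> p1 = p2.
Proof.
  revert l2 p1 p2; induction l1 as [|h1 t1 IH]; intros l2 p1 p2 S1 S2 N1 N2 E.
  { now destruct p1. }
  destruct l2 as [|h2 t2]; [now destruct p2|].
  assert (head_below : forall h t p, StronglySorted lt (h :: t) ->
            nth_error (h :: t) (S p) = Some a -> lt h a /\ In a t).
  { intros h t p Hs Np. simpl in Np. apply nth_error_In in Np. split; [exact (StronglySorted_head_lt Hs Np)|exact Np]. }
  destruct p1 as [|p1], p2 as [|p2]; simpl in N1, N2; auto.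
  - injection N1 as ->. destruct (head_below _ _ _ S2 N2) as [L Ia].
    destruct (proj2 (E h2 L) (or_introl eq_refl)) as [<-|I]; [destruct (lt_irrefl _ L)|].
    destruct (lt_irrefl _ (lt_trans (StronglySorted_head_lt S1 I) L)).
  - injection N2 as ->. destruct (head_below _ _ _ S1 N1) as [L Ia].
    destruct (proj1 (E h1 L) (or_introl eq_refl)) as [<-|I]; [destruct (lt_irrefl _ L)|].
    destruct (lt_irrefl _ (lt_trans (StronglySorted_head_lt S2 I) L)).
  - destruct (head_below _ _ _ S1 N1) as [L1 _], (head_below _ _ _ S2 N2) as [L2 _].
    assert (h1 = h2) as <-.
    { apply StronglySorted_heads_eq with t1 t2; auto; [apply (E h1 L1)|apply (E h2 L2)]; now left. }
    f_equal. apply (IH t2); auto; [exact (proj1 (StronglySorted_inv S1))|exact (proj1 (StronglySorted_inv S2))|].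
    intros y Hy. exact (StronglySorted_tails_iff S1 S2 (E y Hy)).
Qed.

Lemma StronglySorted_app l1 l2 :
  StronglySorted lt l1 -> StronglySorted lt l2 ->
  (forall x y, In x l1 -> In y l2 -> lt x y) -> StronglySorted lt (l1 ++ l2).
Proof.
  induction l1 as [|h t IH]; intros S1 S2 H; auto.
  apply StronglySorted_inv in S1 as [S1 F1]. simpl. constructor.
  - apply IH; auto. intros; apply H; simpl; auto.
  - apply Forall_app; split; auto. apply Forall_forall. intros y Hy. apply H; simpl; auto.
Qed.

Lemma StronglySorted_prefix L P :
  StronglySorted lt L -> StronglySorted lt P -> incl P L ->
  (forall x y, In x P -> In y L -> ~ In y P -> lt x y) ->
  L = P ++ skipn (length P) L.
Proof.
  revert L; induction P as [|a P IH]; intros L SL SP Inc Below; auto.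
  destruct L as [|h L]; [destruct (Inc a (or_introl eq_refl))|].
  assert (h = a) as ->.
  { apply StronglySorted_heads_eq with L P; auto.
    - destruct (classic (In h (a :: P))) as [|Hh]; auto.
      destruct (Inc a (or_introl eq_refl)) as [e|Ia]; [rewrite e in Hh; destruct Hh; now left|].
      destruct (lt_irrefl a (lt_trans (Below a h (or_introl eq_refl) (or_introl eq_refl) Hh)
                                      (StronglySorted_head_lt SL Ia))).
    - apply Inc. now left. }
  simpl. f_equal. apply IH; [exact (proj1 (StronglySorted_inv SL))|exact (proj1 (StronglySorted_inv SP))| |].
  - intros x Hx. destruct (Inc x (or_intror Hx)) as [<-|]; auto.
    destruct (StronglySorted_head_notin SP Hx).
  - intros x y Hx Hy Hn. apply Below; [now right|now right|].
    intros [<-|]; [exact (StronglySorted_head_notin SL Hy)|auto].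
Qed.

Lemma StronglySorted_nth_error_related (Q : T -> T -> Prop) a b :
  StronglySorted lt a -> StronglySorted lt b ->
  (forall u, In u a -> exists v, In v b /\ Q u v) ->
  (forall v, In v b -> exists u, In u a /\ Q u v) ->
  (forall u v u' v', Q u v -> Q u' v' -> (lt u u' <-> lt v v')) ->
  forall p u v, nth_error a p = Some u -> nth_error b p = Some v -> Q u v.
Proof.
  revert b; induction a as [|u0 a IH]; intros b Sa Sb Hab Hba Mon p u v Nu Nv; [now destruct p|].
  destruct b as [|v0 b]; [now destruct p|].
  assert (Q0 : Q u0 v0).
  { destruct (Hba v0 (or_introl eq_refl)) as [u1 [[<-|Iu1] Q1]]; auto.
    destruct (Hab u0 (or_introl eq_refl)) as [w [Iw Qw]].
    assert (Lw : lt w v0) by exact (proj1 (Mon _ _ _ _ Qw Q1) (StronglySorted_head_lt Sa Iu1)).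
    destruct Iw as [<-|Iw]; [destruct (lt_irrefl _ Lw)|].
    destruct (lt_irrefl _ (lt_trans (StronglySorted_head_lt Sb Iw) Lw)). }
  destruct p as [|p]; simpl in Nu, Nv.
  { injection Nu as <-. now injection Nv as <-. }
  apply (IH b (proj1 (StronglySorted_inv Sa)) (proj1 (StronglySorted_inv Sb))) with p; auto.
  - intros u' Hu'. destruct (Hab u' (or_intror Hu')) as [w [[<-|Iw] Qw]]; eauto.
    destruct (lt_irrefl v0 (proj1 (Mon _ _ _ _ Q0 Qw) (StronglySorted_head_lt Sa Hu'))).
  - intros v' Hv'. destruct (Hba v' (or_intror Hv')) as [w [[<-|Iw] Qw]]; eauto.
    destruct (lt_irrefl u0 (proj2 (Mon _ _ _ _ Q0 Qw) (StronglySorted_head_lt Sb Hv'))).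
Qed.

Hypothesis lt_total : forall x y, lt x y \/ x = y \/ lt y x.

Lemma StronglySorted_insert x s : StronglySorted lt s ->
  exists s', StronglySorted lt s' /\ same_elements s' (x :: s).
Proof.
  induction s as [|h t IH]; intros Hs.
  - exists [x]. split; [repeat constructor|]. intro; tauto.
  - destruct (lt_total x h) as [L|[<-|L]].
    + exists (x :: h :: t). split; [|intro; tauto].
      constructor; auto. apply Forall_forall. intros z [<-|Hz]; auto.
      exact (lt_trans L (StronglySorted_head_lt Hs Hz)).
    + exists (x :: t). split; auto. intro y. simpl; tauto.
    + apply StronglySorted_inv in Hs as [Hs F]. destruct (IH Hs) as [t' [Hs' E']].
      exists (h :: t'). split.
      * constructor; auto. apply Forall_forall. intros z Hz.
        destruct (proj1 (E' z) Hz) as [<-|Hz']; auto. exact (proj1 (Forall_forall _ _) F z Hz').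
      * intro y. specialize (E' y). simpl in *. tauto.
Qed.

Lemma StronglySorted_enumeration l : exists s, StronglySorted lt s /\ same_elements s l.
Proof.
  induction l as [|x l [s [Hs E]]].
  - exists []. split; [constructor|intro; tauto].
  - destruct (StronglySorted_insert x _ Hs) as [s' [Hs' E']]. exists s'. split; auto.
    intro y. rewrite (E' y). specialize (E y). simpl. tauto.
Qed.

End StronglySortedLists.

Lemma nth_error_same_length {T U : Type} (l : list T) (l' : list U) j x :
  length l = length l' -> nth_error l j = Some x -> exists y, nth_error l' j = Some y.
Proof.
  intros E Nx. destruct (nth_error l' j) as [y|] eqn:Ny; eauto.
  apply nth_error_None in Ny. assert (j < length l) by (apply nth_error_Some; congruence). lia.
Qed.

Lemma map_preimage {T U : Type} (f : T -> U) (a : list U) :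
  (forall y, In y a -> exists x, f x = y) -> exists l, map f l = a.
Proof.
  induction a as [|y a IH]; intros Ha; [now exists []|].
  destruct (Ha y (or_introl eq_refl)) as [x <-].
  destruct IH as [l <-]; [intros; apply Ha; now right|].
  now exists (x :: l).
Qed.

Lemma countable_pred_transfer {T U : Type} (P : T -> Prop) (Q : U -> Prop) (rel : U -> T -> Prop) :
  inhabited U ->
  (forall x, P x -> exists y, Q y /\ rel y x) ->
  (forall y x x', P x -> P x' -> rel y x -> rel y x' -> x = x') ->
  countable_pred Q -> countable_pred P.
Proof.
  intros [u] Hex Huniq [f Hf].
  destruct (choice (fun x y => P x -> Q y /\ rel y x)) as [g Hg].
  { intro x. destruct (classic (P x)) as [Px|]; [|now exists u].
    destruct (Hex x Px) as [y Hy]. now exists y. }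
  exists (fun x => f (g x)). intros x x' Px Px' E.
  destruct (Hg x Px) as [Qx Rx], (Hg x' Px') as [Qx' Rx'].
  apply (Huniq (g x)); auto. now rewrite (Hf _ _ Qx Qx' E).
Qed.

Lemma binary_code_exists M (P : nat -> Prop) :
  exists i, i < 2 ^ M /\ forall j, j < M -> (Nat.testbit i j = true <-> P j).
Proof.
  revert P; induction M as [|M IH]; intro P; [exists 0; split; [simpl; lia|intros; lia]|].
  destruct (IH (fun j => P (S j))) as [i [Hi Bi]].
  assert (Hpow : 2 ^ S M = 2 * 2 ^ M) by reflexivity.
  destruct (classic (P 0)) as [P0|P0].
  - exists (2 * i + 1). split; [lia|]. intros [|j] Hj.
    + rewrite Nat.testbit_odd_0. tauto.
    + rewrite Nat.testbit_odd_succ by lia. apply Bi. lia.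
  - exists (2 * i). split; [lia|]. intros [|j] Hj.
    + rewrite Nat.testbit_even_0. split; [discriminate|tauto].
    + rewrite Nat.testbit_even_succ by lia. apply Bi. lia.
Qed.

Section MixedRadix.
Local Open Scope R_scope.
Variable b : nat -> nat.
Hypothesis b_ge2 : forall k, (2 <= b k)%nat.

Fixpoint weight (k : nat) : R :=
  match k with 0%nat => 1 | S k => weight k / INR (b k) end.

Lemma weight_pos k : 0 < weight k.
Proof.
  induction k as [|k IH]; simpl; [lra|].
  apply Rdiv_lt_0_compat; auto. apply lt_0_INR. specialize (b_ge2 k). lia.
Qed.

Lemma weight_S k : INR (b k) * weight (S k) = weight k.
Proof. simpl. field. apply not_0_INR. specialize (b_ge2 k). lia. Qed.

Lemma weight_S_le k : weight (S k) <= weight k.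
Proof.
  rewrite <- (weight_S k). pose proof (weight_pos (S k)).
  assert (2 <= INR (b k)) by (replace 2 with (INR 2) by reflexivity; apply le_INR, b_ge2). nra.
Qed.

Fixpoint partial_value (g : nat -> nat) (N : nat) : R :=
  match N with 0%nat => 0 | S N' => partial_value g N' + INR (g N') * weight N end.

Lemma partial_value_S g N : partial_value g (S N) = partial_value g N + INR (g N) * weight (S N).
Proof. reflexivity. Qed.

Definition capped_partial_values (g : nat -> nat) (y : R) : Prop :=
  exists N, y = partial_value g N /\ y <= 1.

Lemma capped_partial_values_bound g : bound (capped_partial_values g).
Proof. exists 1. now intros y [N [_ Hy]]. Qed.

Lemma capped_partial_values_inhabited g : exists y, capped_partial_values g y.
Proof. exists 0, 0%nat. split; [reflexivity|lra]. Qed.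

(* Capping at 1 only makes the set bounded for every [g]: for digit sequences
   with [g k + 2 <= b k] all partial values are below 1 anyway. *)
Definition radix_value (g : nat -> nat) : R :=
  proj1_sig (completeness _ (capped_partial_values_bound g) (capped_partial_values_inhabited g)).

Lemma radix_value_lub g : is_lub (capped_partial_values g) (radix_value g).
Proof. exact (proj2_sig (completeness _ _ _)). Qed.

Section Digits.
Variable g : nat -> nat.
Hypothesis g_small : forall k, (g k + 2 <= b k)%nat.

Lemma partial_value_step N :
  partial_value g (S N) + weight (S N) <= partial_value g N + weight N - weight (S N).
Proof.
  rewrite partial_value_S, <- (weight_S N).
  assert (INR (g N) + 2 <= INR (b N)).
  { replace 2 with (INR 2) by reflexivity. rewrite <- plus_INR. apply le_INR, g_small. }
  pose proof (weight_pos (S N)). nra.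
Qed.

Lemma partial_value_mono N d : partial_value g N <= partial_value g (N + d).
Proof.
  induction d as [|d IH]; [rewrite Nat.add_0_r; lra|].
  rewrite Nat.add_succ_r, partial_value_S.
  pose proof (weight_pos (S (N + d))). pose proof (pos_INR (g (N + d))). nra.
Qed.

Lemma partial_value_weight_antitone N d :
  partial_value g (N + d) + weight (N + d) <= partial_value g N + weight N.
Proof.
  induction d as [|d IH]; [rewrite Nat.add_0_r; lra|].
  rewrite Nat.add_succ_r. pose proof (partial_value_step (N + d)). pose proof (weight_pos (S (N + d))). lra.
Qed.

Lemma partial_value_tail L N :
  partial_value g N <= partial_value g (S L) + weight (S L) - weight (S (S L)).
Proof.
  destruct (Nat.le_gt_cases N (S L)) as [HN|HN].
  - replace (S L) with (N + (S L - N))%nat by lia.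
    pose proof (partial_value_mono N (S L - N)).
    replace (N + (S L - N))%nat with (S L) in * by lia.
    pose proof (weight_S_le (S L)). lra.
  - replace N with (S (S L) + (N - S (S L)))%nat by lia.
    pose proof (partial_value_weight_antitone (S (S L)) (N - S (S L))).
    pose proof (partial_value_step (S L)). pose proof (weight_pos (S (S L) + (N - S (S L)))). lra.
Qed.

Lemma radix_value_ge N : partial_value g N <= radix_value g.
Proof.
  apply (radix_value_lub g). exists N. split; auto.
  pose proof (partial_value_weight_antitone 0 N). pose proof (weight_pos N). simpl in *. lra.
Qed.

Lemma radix_value_le L : radix_value g <= partial_value g (S L) + weight (S L) - weight (S (S L)).
Proof.
  apply (radix_value_lub g). intros y [N [-> _]]. apply partial_value_tail.
Qed.

End Digits.

Lemma partial_value_ext g g' L :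
  (forall k, (k < L)%nat -> g k = g' k) -> partial_value g L = partial_value g' L.
Proof.
  induction L as [|L IH]; intros E; simpl; auto.
  rewrite IH by (intros; apply E; lia). rewrite (E L) by lia. reflexivity.
Qed.

Lemma radix_value_lt g g' L :
  (forall k, (g k + 2 <= b k)%nat) -> (forall k, (g' k + 2 <= b k)%nat) ->
  (forall k, (k < L)%nat -> g k = g' k) -> (g L < g' L)%nat -> radix_value g < radix_value g'.
Proof.
  intros Hg Hg' E Hlt.
  pose proof (radix_value_le g Hg L) as Hle. pose proof (radix_value_ge g' Hg' (S L)) as Hge.
  rewrite partial_value_S in Hle, Hge. rewrite (partial_value_ext g g' L E) in Hle.
  assert (INR (g L) + 1 <= INR (g' L)) by (rewrite <- S_INR; apply le_INR; lia).
  pose proof (weight_pos (S L)). pose proof (weight_pos (S (S L))). nra.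
Qed.

Lemma first_difference (g g' : nat -> nat) k : g k <> g' k ->
  exists L, (L <= k)%nat /\ g L <> g' L /\ forall j, (j < L)%nat -> g j = g' j.
Proof.
  intro Hk.
  destruct (dec_inh_nat_subset_has_unique_least_element (fun j => g j <> g' j)) as [L [[HL Hmin] _]].
  - intro j. destruct (Nat.eq_dec (g j) (g' j)); auto.
  - now exists k.
  - exists L. split; [now apply Hmin|split; auto].
    intros j Hj. destruct (Nat.eq_dec (g j) (g' j)) as [|Hne]; auto. specialize (Hmin j Hne). lia.
Qed.

Lemma radix_value_neq g g' k :
  (forall k, (g k + 2 <= b k)%nat) -> (forall k, (g' k + 2 <= b k)%nat) ->
  g k <> g' k -> radix_value g <> radix_value g'.
Proof.
  intros Hg Hg' Hk. destruct (first_difference g g' k Hk) as [L [_ [HL E]]].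
  destruct (Nat.lt_gt_cases (g L) (g' L)) as [[Hlt|Hlt] _]; auto.
  - pose proof (radix_value_lt g g' L Hg Hg' E Hlt). lra.
  - pose proof (radix_value_lt g' g L Hg' Hg (fun j Hj => eq_sym (E j Hj)) Hlt). lra.
Qed.

(* The order of two values is decided by their first differing digit. *)
Lemma radix_value_lt_transfer g1 g2 g1' g2' l k :
  (forall k, (g1 k + 2 <= b k)%nat) -> (forall k, (g2 k + 2 <= b k)%nat) ->
  (forall k, (g1' k + 2 <= b k)%nat) -> (forall k, (g2' k + 2 <= b k)%nat) ->
  (forall j, (j <= l)%nat -> g1 j = g1' j) -> (forall j, (j <= l)%nat -> g2 j = g2' j) ->
  (k <= l)%nat -> g1 k <> g2 k ->
  (radix_value g1 < radix_value g2 <-> radix_value g1' < radix_value g2').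
Proof.
  intros H1 H2 H1' H2' E1 E2 Hkl Hk.
  destruct (first_difference g1 g2 k Hk) as [L [HLk [HL E]]].
  assert (E' : forall j, (j < L)%nat -> g1' j = g2' j).
  { intros j Hj. rewrite <- E1, <- E2 by lia. auto. }
  assert (e1 : g1' L = g1 L) by (symmetry; apply E1; lia).
  assert (e2 : g2' L = g2 L) by (symmetry; apply E2; lia).
  destruct (Nat.lt_gt_cases (g1 L) (g2 L)) as [[Hlt|Hlt] _]; [exact HL| |].
  - assert (Hlt' : (g1' L < g2' L)%nat) by lia.
    pose proof (radix_value_lt g1 g2 L H1 H2 E Hlt).
    pose proof (radix_value_lt g1' g2' L H1' H2' E' Hlt'). lra.
  - assert (Hlt' : (g2' L < g1' L)%nat) by lia.
    pose proof (radix_value_lt g2 g1 L H2 H1 (fun j Hj => eq_sym (E j Hj)) Hlt).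
    pose proof (radix_value_lt g2' g1' L H2' H1' (fun j Hj => eq_sym (E' j Hj)) Hlt'). lra.
Qed.

End MixedRadix.

(* [cycle_index] takes every value infinitely often: [cycle_index (2 ^ N + v) = v] for [v < 2 ^ N]. *)
Definition cycle_index (k : nat) : nat := k - 2 ^ Nat.log2 k.

(* The type with [n_(k+1) = 2 ^ m_k]: the index of a block can then prescribe
   one bit for each position of a rank-[k] set. *)
Fixpoint tau_m (k : nat) : nat :=
  match k with
  | 0 => 1
  | S k => cycle_index k + (tau_m k - cycle_index k) * 2 ^ tau_m k
  end.
Definition tau_n (k : nat) : nat := 2 ^ tau_m (pred k).
Definition tau_r (k : nat) : nat := cycle_index (pred k).

Lemma cycle_index_le k : cycle_index k <= k.
Proof. unfold cycle_index. lia. Qed.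

Lemma cycle_index_hits v N : exists k, N <= k /\ cycle_index k = v.
Proof.
  exists (2 ^ (N + v + 1) + v). pose proof (Nat.pow_gt_lin_r 2 (N + v + 1) ltac:(lia)).
  split; [lia|]. unfold cycle_index.
  rewrite (Nat.log2_unique (2 ^ (N + v + 1) + v) (N + v + 1)); [lia|lia|].
  split; [lia|]. rewrite Nat.pow_succ_r'. lia.
Qed.

Lemma tau_m_gt k : k < tau_m k.
Proof.
  induction k as [|k IH]; simpl; [lia|].
  pose proof (cycle_index_le k). pose proof (Nat.pow_gt_lin_r 2 (tau_m k) ltac:(lia)). nia.
Qed.

Lemma tau_is_type : is_type tau_m tau_n tau_r.
Proof.
  pose proof tau_m_gt as Hm. pose proof cycle_index_le as Hc.
  split; [|split; [|split; [|split]]]; try reflexivity.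
  - intros [|k] Hk; [lia|]. specialize (Hm k). exact (Nat.pow_le_mono_r 2 1 (tau_m k) ltac:(lia) ltac:(lia)).
  - intros v N. destruct (cycle_index_hits v N) as [k [Hk E]]. exists (S k). split; [lia|exact E].
  - intro k. unfold tau_r. simpl pred. specialize (Hm k). specialize (Hc k). lia.
Qed.

Lemma tau_n_large k : 2 ^ tau_m k <= tau_n (S k).
Proof. reflexivity. Qed.

Section ConstructionScheme.
Variables (W : Type) (lt : W -> W -> Prop).
Hypothesis lt_irrefl : forall x, ~ lt x x.
Hypothesis lt_trans : forall x y z, lt x y -> lt y z -> lt x z.
Variable Fam : list W -> Prop.
Variables m n r : nat -> nat.
Hypothesis scheme : construction_scheme lt Fam m n r.
Hypothesis type : is_type m n r.

Lemma Fam_sorted {A} : Fam A -> StronglySorted lt A.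
Proof. intro HA. apply Sorted_StronglySorted; [exact lt_trans|]. now apply scheme. Qed.

Lemma Fam_cover l : exists A, Fam A /\ incl l A.
Proof. apply scheme. Qed.

Lemma rank_length {k A} : rank Fam A k -> length A = m k.
Proof. apply scheme. Qed.

Lemma rank_cap_initial {k E F} : rank Fam E k -> rank Fam F k -> cap_initial lt E F.
Proof. apply scheme. Qed.

Lemma rank_S_decomposition {k F} : rank Fam F (S k) -> exists Fs root, decomposition lt Fam n r k F Fs root.
Proof.
  intro HF. destruct scheme as (_ & _ & _ & _ & Hdec).
  destruct (Hdec k F HF) as (Fs & root & HD & _). eauto.
Qed.

Lemma rank_sorted {k A} : rank Fam A k -> StronglySorted lt A.
Proof. intros [HA _]. now apply Fam_sorted. Qed.

Lemma rank_NoDup {k A} : rank Fam A k -> NoDup A.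
Proof. intro HA. exact (StronglySorted_NoDup lt_irrefl (rank_sorted HA)). Qed.

Lemma nth_error_rank_lt {k G j a} : rank Fam G k -> nth_error G j = Some a -> j < m k.
Proof. intros HG E. rewrite <- (rank_length HG). apply nth_error_Some. congruence. Qed.

Lemma n_ge2 k : 2 <= n (S k).
Proof. apply type. lia. Qed.

Lemma r_lt_m k : r (S k) < m k.
Proof. apply type. Qed.

Lemma m_S k : m (S k) = r (S k) + (m k - r (S k)) * n (S k).
Proof. apply type. Qed.

Lemma m_pos k : 0 < m k.
Proof. destruct k as [|k]; [rewrite (proj1 type); lia|]. pose proof (r_lt_m (S k)). lia. Qed.

Lemma chain_below_length A k : Fam A -> chain_below Fam A k -> k <= length A.
Proof.
  intros HA [c [Hc [Hstep Hbelow]]]. destruct k as [|k]; [lia|].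
  assert (ssub_length : forall B C, Fam B -> Fam C -> ssub B C -> length B < length C).
  { intros B C HB HC [Inc NInc]. destruct (Nat.lt_ge_cases (length B) (length C)) as [|Hge]; auto.
    destruct NInc. apply NoDup_length_incl; auto. exact (StronglySorted_NoDup lt_irrefl (Fam_sorted HB)). }
  assert (Hlen : forall i, i < S k -> i <= length (c i)).
  { induction i as [|i IH]; intros Hi; [lia|].
    pose proof (ssub_length _ _ (Hc i ltac:(lia)) (Hc (S i) Hi) (Hstep i Hi)). specialize (IH ltac:(lia)). lia. }
  pose proof (ssub_length _ _ (Hc k ltac:(lia)) HA (Hbelow k ltac:(lia))). specialize (Hlen k ltac:(lia)). lia.
Qed.

Lemma rank_exists {A} : Fam A -> exists k, rank Fam A k.
Proof.
  intro HA.
  assert (Hmax : forall N, chain_below Fam A 0 -> ~ chain_below Fam A N ->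
                   exists k, chain_below Fam A k /\ ~ chain_below Fam A (S k)).
  { induction N as [|N IH]; intros H0 HN; [contradiction|].
    destruct (classic (chain_below Fam A N)) as [C|C]; eauto. }
  destruct (Hmax (S (length A))) as [k [C1 C2]].
  - exists (fun _ => A). repeat split; intros; lia.
  - intro C. apply chain_below_length in C; auto. lia.
  - now exists k.
Qed.

(* Beyond the root, position [P] of a rank-[k+1] set is position [block_pos k P]
   of its block with index [block_index k P]. *)
Definition block_index (k P : nat) : nat := (P - r (S k)) / (m k - r (S k)).
Definition block_pos (k P : nat) : nat :=
  if P <? r (S k) then P else r (S k) + (P - r (S k)) mod (m k - r (S k)).

Section Decomposition.
Context {k : nat} {F : list W} {Fs : nat -> list W} {root : list W}.
Hypothesis F_rank : rank Fam F (S k).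
Hypothesis F_dec : decomposition lt Fam n r k F Fs root.
Local Notation N := (n (S k)).
Local Notation M := (m k).
Local Notation rho := (r (S k)).

Lemma part_rank {i} : i < N -> rank Fam (Fs i) k.
Proof. apply F_dec. Qed.

Lemma part_length {i} : i < N -> length (Fs i) = M.
Proof. intro Hi. exact (rank_length (part_rank Hi)). Qed.

Lemma part_sorted {i} : i < N -> StronglySorted lt (Fs i).
Proof. intro Hi. exact (rank_sorted (part_rank Hi)). Qed.

Lemma root_sorted : StronglySorted lt root.
Proof. apply Sorted_StronglySorted; [exact lt_trans|]. apply F_dec. Qed.

Lemma root_length : length root = rho.
Proof. apply F_dec. Qed.

Lemma root_incl_part {i} : i < N -> incl root (Fs i).
Proof.
  intros Hi x Hx. destruct F_dec as [_ [_ [Hroot _]]]. pose proof (n_ge2 k).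
  destruct (Nat.eq_dec i 0) as [->|Hne].
  - exact (proj1 (proj2 (Hroot 0 1 ltac:(lia) ltac:(lia) ltac:(lia) x) Hx)).
  - exact (proj1 (proj2 (Hroot i 0 Hi ltac:(lia) Hne x) Hx)).
Qed.

Lemma part_not_root {i} : i < N -> exists z, In z (Fs i) /\ ~ In z root.
Proof.
  intro Hi. apply NNPP. intro C.
  assert (Inc : incl (Fs i) root) by (intros z Hz; apply NNPP; intro Hn; apply C; eauto).
  pose proof (NoDup_incl_length (rank_NoDup (part_rank Hi)) Inc).
  rewrite (part_length Hi), root_length in *. pose proof (r_lt_m k). lia.
Qed.

Lemma root_lt_part {i} : i < N -> forall x y, In x root -> In y (Fs i) -> ~ In y root -> lt x y.
Proof.
  destruct F_dec as [_ [_ [_ [_ [_ [Hfirst Hnext]]]]]].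
  induction i as [|i IH]; intros Hi x y Hx Hy Hn; auto.
  destruct (@part_not_root i ltac:(lia)) as [z [Hz Hzn]].
  apply lt_trans with z; [apply IH; auto; lia|]. now apply (Hnext i).
Qed.

Lemma part_lt_part {i j} : i < j -> j < N ->
  forall y z, In y (Fs i) -> ~ In y root -> In z (Fs j) -> ~ In z root -> lt y z.
Proof.
  destruct F_dec as [_ [_ [_ [_ [_ [_ Hnext]]]]]].
  induction j as [|j IH]; intros Hij Hj y z Hy Hyn Hz Hzn; [lia|].
  destruct (Nat.eq_dec i j) as [->|Hne]; [now apply (Hnext j)|].
  destruct (@part_not_root j ltac:(lia)) as [w [Hw Hwn]].
  apply lt_trans with w; [apply IH; auto; lia|]. now apply (Hnext j).
Qed.

Definition block i := skipn rho (Fs i).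

Lemma part_eq_root_app_block {i} : i < N -> Fs i = root ++ block i.
Proof.
  intro Hi. unfold block. rewrite <- root_length.
  apply (StronglySorted_prefix lt_irrefl lt_trans); auto using part_sorted, root_sorted, root_incl_part.
  intros x y Hx Hy Hn. now apply (root_lt_part Hi).
Qed.

Lemma block_length {i} : i < N -> length (block i) = M - rho.
Proof. intro Hi. unfold block. now rewrite length_skipn, (part_length Hi). Qed.

Lemma In_block {i x} : i < N -> In x (block i) -> In x (Fs i) /\ ~ In x root.
Proof.
  intros Hi Hx. pose proof (rank_NoDup (part_rank Hi)) as ND. rewrite (part_eq_root_app_block Hi) in ND |- *.
  split; [apply in_or_app; auto|]. intro Hr.
  apply in_split in Hx as [l1 [l2 E]]. rewrite E, app_assoc in ND.
  apply (NoDup_remove_2 _ _ _ ND). apply in_or_app. left. apply in_or_app. now left.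
Qed.

Lemma block_sorted {i} : i < N -> StronglySorted lt (block i).
Proof.
  intro Hi. pose proof (part_sorted Hi) as Hs. rewrite (part_eq_root_app_block Hi) in Hs.
  clear -Hs. induction root as [|x l IH]; auto. apply IH. exact (proj1 (StronglySorted_inv Hs)).
Qed.

Fixpoint blocks (j : nat) : list W :=
  match j with 0 => [] | S j => blocks j ++ block j end.

Lemma blocks_length j : j <= N -> length (blocks j) = j * (M - rho).
Proof.
  induction j as [|j IH]; intros Hj; simpl; auto.
  rewrite length_app, IH, (block_length (i := j)) by lia. lia.
Qed.

Lemma In_blocks j x : In x (blocks j) <-> exists i, i < j /\ In x (block i).
Proof.
  induction j as [|j IH]; simpl; [split; [tauto|intros [i [Hi _]]; lia]|].
  rewrite in_app_iff, IH. split.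
  - intros [[i [Hi H]]|H]; [exists i|exists j]; split; auto; lia.
  - intros [i [Hi H]]. destruct (Nat.eq_dec i j) as [->|]; auto. left. exists i. split; auto; lia.
Qed.

Lemma blocks_sorted j : j <= N -> StronglySorted lt (blocks j).
Proof.
  induction j as [|j IH]; intros Hj; simpl; [constructor|].
  apply StronglySorted_app; [apply IH; lia|apply block_sorted; lia|].
  intros x y Hx Hy. apply In_blocks in Hx as [i [Hi Hx]].
  apply In_block in Hx as [Hx Hxn]; [|lia]. apply In_block in Hy as [Hy Hyn]; [|lia].
  apply (part_lt_part Hi); auto; lia.
Qed.

Lemma F_eq_root_app_blocks : F = root ++ blocks N.
Proof.
  apply (StronglySorted_ext lt_irrefl lt_trans); [exact (rank_sorted F_rank)| |].
  - apply StronglySorted_app; auto using root_sorted, blocks_sorted.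
    intros x y Hx Hy. apply In_blocks in Hy as [i [Hi Hy]].
    apply In_block in Hy as [Hy Hyn]; auto. exact (root_lt_part Hi x y Hx Hy Hyn).
  - destruct F_dec as [_ [HF _]]. intro x. rewrite HF, in_app_iff, In_blocks. split.
    + intros [i [Hi Hx]]. rewrite (part_eq_root_app_block Hi), in_app_iff in Hx.
      destruct Hx; auto. right. now exists i.
    + pose proof (n_ge2 k). intros [Hx|[i [Hi Hx]]].
      * exists 0. split; [lia|]. exact (root_incl_part (i := 0) ltac:(lia) x Hx).
      * exists i. split; auto. now apply In_block.
Qed.

Lemma nth_error_blocks j i q : j <= N -> i < j -> q < M - rho ->
  nth_error (blocks j) (i * (M - rho) + q) = nth_error (block i) q.
Proof.
  induction j as [|j IH]; intros Hj Hi Hq; [lia|]. simpl.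
  destruct (Nat.eq_dec i j) as [->|Hne].
  - rewrite nth_error_app2; rewrite blocks_length by lia; [|lia]. f_equal. lia.
  - rewrite nth_error_app1; [apply IH; lia|]. rewrite blocks_length by lia. nia.
Qed.

Lemma nth_error_part_high {i j y} : i < N -> rho <= j -> nth_error (Fs i) j = Some y ->
  nth_error F (rho + i * (M - rho) + (j - rho)) = Some y.
Proof.
  intros Hi Hj E. pose proof (nth_error_rank_lt (part_rank Hi) E).
  rewrite (part_eq_root_app_block Hi), nth_error_app2, root_length in E by (rewrite root_length; lia).
  rewrite F_eq_root_app_blocks, nth_error_app2, root_length by (rewrite root_length; nia).
  replace (rho + i * (M - rho) + (j - rho) - rho) with (i * (M - rho) + (j - rho)) by nia.
  rewrite nth_error_blocks; auto; lia.
Qed.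

Lemma nth_error_part_low i j : i < N -> j < rho -> nth_error (Fs i) j = nth_error F j.
Proof.
  intros Hi Hj. rewrite F_eq_root_app_blocks, (part_eq_root_app_block Hi).
  rewrite !nth_error_app1; auto; now rewrite root_length.
Qed.

Lemma nth_error_descend {P a} : nth_error F P = Some a ->
  exists i, i < N /\ nth_error (Fs i) (block_pos k P) = Some a.
Proof.
  intro E. pose proof (n_ge2 k). pose proof (r_lt_m k).
  pose proof (nth_error_rank_lt F_rank E) as HP. rewrite m_S in HP.
  unfold block_pos. destruct (Nat.ltb_spec P rho).
  - exists 0. split; [lia|]. now rewrite nth_error_part_low by lia.
  - set (i := block_index k P). set (q := (P - rho) mod (M - rho)).
    assert (Pe : P - rho = (M - rho) * i + q) by (apply Nat.div_mod; lia).
    assert (q < M - rho) by (apply Nat.mod_upper_bound; lia).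
    assert (Hi : i < N) by nia.
    exists i. split; auto.
    destruct (nth_error (Fs i) (rho + q)) as [y|] eqn:Ey.
    + pose proof (@nth_error_part_high i (rho + q) y Hi ltac:(lia) Ey) as Ey'.
      replace (rho + i * (M - rho) + (rho + q - rho)) with P in Ey' by nia. congruence.
    + apply nth_error_None in Ey. rewrite (part_length Hi) in Ey. lia.
Qed.

End Decomposition.

(* Well defined since two sets of the same rank meet in an initial segment of both. *)
Definition pos (k : nat) (a : W) : nat :=
  epsilon (inhabits 0) (fun p => exists G, rank Fam G k /\ nth_error G p = Some a).

Lemma pos_nth {k G p a} : rank Fam G k -> nth_error G p = Some a -> pos k a = p.
Proof.
  intros HG E. unfold pos.
  destruct (epsilon_spec (inhabits 0) (fun p => exists G, rank Fam G k /\ nth_error G p = Some a))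
    as [G' [HG' E']]; [eauto|].
  symmetry. apply (StronglySorted_position_unique lt_irrefl lt_trans (rank_sorted HG) (rank_sorted HG') E E').
  destruct (rank_cap_initial HG HG') as [c1 c2].
  apply nth_error_In in E, E'.
  intros y Hy. split; intro Hin; [apply (c1 a y)|apply (c2 a y)]; auto.
Qed.

Lemma pos_same {l} : forall {G G' j a a'}, rank Fam G l -> rank Fam G' l ->
  nth_error G j = Some a -> nth_error G' j = Some a' -> forall k, k <= l -> pos k a = pos k a'.
Proof.
  induction l as [|l IH]; intros G G' j a a' HG HG' Ea Ea' k Hk.
  { replace k with 0 by lia. now rewrite (pos_nth HG Ea), (pos_nth HG' Ea'). }
  destruct (Nat.eq_dec k (S l)) as [->|Hne]; [now rewrite (pos_nth HG Ea), (pos_nth HG' Ea')|].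
  destruct (rank_S_decomposition HG) as [Fs [root HD]], (rank_S_decomposition HG') as [Fs' [root' HD']].
  destruct (nth_error_descend HG HD Ea) as [i [Hi Ei]], (nth_error_descend HG' HD' Ea') as [i' [Hi' Ei']].
  exact (IH _ _ _ _ _ (part_rank HD Hi) (part_rank HD' Hi') Ei Ei' k ltac:(lia)).
Qed.

Definition level_bit (k P : nat) : bool :=
  match k with 0 => false | S k => Nat.testbit (block_index k P) (block_pos k P) end.

Lemma level_bit_block l i j : r (S l) <= j < m l ->
  level_bit (S l) (r (S l) + i * (m l - r (S l)) + (j - r (S l))) = Nat.testbit i j.
Proof.
  intros Hj. unfold level_bit, block_index, block_pos.
  set (rho := r (S l)). set (P := rho + i * (m l - rho) + (j - rho)).
  assert (e : P - rho = (m l - rho) * i + (j - rho)) by (unfold P; nia).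
  destruct (Nat.ltb_spec P rho); [unfold P in *; lia|].
  rewrite e, <- (Nat.div_unique _ _ i (j - rho)), <- (Nat.mod_unique _ _ i (j - rho)) by lia.
  f_equal. lia.
Qed.

(* The digit of [a] at level [k] is its position in the rank-[k] sets, plus [m k]
   when the block index at level [k] has a 1 at the position of [a] in its block.
   The [min] only matters for the junk value of [pos] when [a] lies in no rank-[k] set. *)
Definition digit (a : W) (k : nat) : nat :=
  (if level_bit k (pos k a) then m k else 0) + Nat.min (pos k a) (m k - 1).

Definition base (k : nat) : nat := 2 * m k + 2.

Definition code (a : W) : R := radix_value base (digit a).

Lemma base_ge2 k : 2 <= base k.
Proof. unfold base. lia. Qed.

Lemma digit_small a k : digit a k + 2 <= base k.
Proof. unfold digit, base. destruct level_bit; lia. Qed.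

Lemma digit_same {l G G' j a a'} : rank Fam G l -> rank Fam G' l ->
  nth_error G j = Some a -> nth_error G' j = Some a' -> forall k, k <= l -> digit a k = digit a' k.
Proof. intros HG HG' Ea Ea' k Hk. unfold digit. now rewrite (pos_same HG HG' Ea Ea' k Hk). Qed.

Lemma digit_neq_at_rank {l G j1 j2 y1 y2} : rank Fam G l ->
  nth_error G j1 = Some y1 -> nth_error G j2 = Some y2 -> j1 <> j2 -> digit y1 l <> digit y2 l.
Proof.
  intros HG E1 E2 Hne. unfold digit. rewrite (pos_nth HG E1), (pos_nth HG E2).
  pose proof (nth_error_rank_lt HG E1). pose proof (nth_error_rank_lt HG E2).
  destruct level_bit, level_bit; lia.
Qed.

Lemma code_injective {a b} : code a = code b -> a = b.
Proof.
  intro E. apply NNPP. intro Hne.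
  destruct (Fam_cover [a; b]) as [A [HA Hinc]]. destruct (rank_exists HA) as [k Hk].
  destruct (In_nth_error A a (Hinc a (or_introl eq_refl))) as [p Ep].
  destruct (In_nth_error A b (Hinc b (or_intror (or_introl eq_refl)))) as [q Eq].
  refine (radix_value_neq base base_ge2 (digit a) (digit b) k (digit_small a) (digit_small b) _ E).
  apply (digit_neq_at_rank Hk Ep Eq). intros <-. congruence.
Qed.

Lemma code_lt_transfer {l G G' j1 j2 y1 y2 y1' y2'} : rank Fam G l -> rank Fam G' l ->
  nth_error G j1 = Some y1 -> nth_error G j2 = Some y2 ->
  nth_error G' j1 = Some y1' -> nth_error G' j2 = Some y2' ->
  (code y1 < code y2 <-> code y1' < code y2')%R.
Proof.
  intros HG HG' E1 E2 E1' E2'.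
  destruct (Nat.eq_dec j1 j2) as [<-|Hne].
  - rewrite E1 in E2. rewrite E1' in E2'. injection E2 as <-. injection E2' as <-.
    split; intro H; destruct (Rlt_irrefl _ H).
  - apply (radix_value_lt_transfer base base_ge2 _ _ _ _ l l); auto using digit_small.
    + exact (digit_same HG HG' E1 E1').
    + exact (digit_same HG HG' E2 E2').
    + exact (digit_neq_at_rank HG E1 E2 Hne).
Qed.

Lemma code_lt_of_block_bits {l F Fs root i i' j y y'} :
  rank Fam F (S l) -> decomposition lt Fam n r l F Fs root ->
  i < n (S l) -> i' < n (S l) -> r (S l) <= j ->
  nth_error (Fs i) j = Some y -> nth_error (Fs i') j = Some y' ->
  Nat.testbit i j = true -> Nat.testbit i' j = false -> (code y' < code y)%R.
Proof.
  intros HF HD Hi Hi' Hj E E' B B'.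
  pose proof (nth_error_rank_lt (part_rank HD Hi) E). pose proof (m_pos (S l)).
  apply (radix_value_lt base base_ge2 _ _ (S l) (digit_small y') (digit_small y)).
  - intros k Hk. apply (digit_same (part_rank HD Hi') (part_rank HD Hi) E' E). lia.
  - unfold digit.
    rewrite (pos_nth HF (nth_error_part_high HF HD Hi Hj E)), (pos_nth HF (nth_error_part_high HF HD Hi' Hj E')).
    rewrite !level_bit_block, B, B' by lia. lia.
Qed.

Hypothesis lt_total : forall x y, lt x y \/ x = y \/ lt y x.
Hypothesis W_uncountable : ~ countable_pred (fun _ : W => True).
Hypothesis capturing : fully_capturing lt Fam n r.
Hypothesis n_large : forall k, 2 ^ m k <= n (S k).

Definition code_range (y : R) : Prop := exists a, code a = y.

Lemma code_range_uncountable : ~ countable_pred code_range.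
Proof.
  intro Hc. apply W_uncountable.
  apply (countable_pred_transfer (fun _ => True) code_range (fun y a => code a = y)); auto.
  - exact (inhabits 0%R).
  - intros a _. exists (code a). split; auto. now exists a.
  - intros y a a' _ _ <- E. now apply code_injective.
Qed.

Lemma code_sorted_preimage a : (forall y, In y a -> code_range y) ->
  exists s, StronglySorted lt s /\ same_elements a (map code s).
Proof.
  intro Ha. destruct (map_preimage code a Ha) as [l <-].
  destruct (StronglySorted_enumeration lt_trans lt_total l) as [s [Ss Es]].
  exists s. split; auto. intro y. rewrite !in_map_iff.
  split; intros [x [<- Hx]]; exists x; split; auto; apply Es; auto.
Qed.

Lemma map_code_injective {s s'} : StronglySorted lt s -> StronglySorted lt s' ->
  same_elements (map code s) (map code s') -> s = s'.
Proof.
  intros Hs Hs' E. apply (StronglySorted_ext lt_irrefl lt_trans Hs Hs'). intro x.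
  specialize (E (code x)). rewrite !in_map_iff in E.
  split; intro Hx.
  - destruct (proj1 E (ex_intro _ x (conj eq_refl Hx))) as [x' [Ex Hx']].
    now rewrite (code_injective Ex) in Hx'.
  - destruct (proj2 E (ex_intro _ x (conj eq_refl Hx))) as [x' [Ex Hx']].
    now rewrite (code_injective Ex) in Hx'.
Qed.

Section CapturedFamily.
Context {K : nat} {A : list R -> Prop}.
Hypothesis A_shape : forall {a}, A a -> length a = K /\ Sorted Rlt a /\ (forall x, In x a -> code_range x).
Hypothesis A_disjoint : forall {a b}, A a -> A b -> a <> b -> forall x, In x a -> ~ In x b.
Context {l : nat} {F : list W} {Fs : nat -> list W} {root : list W}.
Context {cs : nat -> list W} {aa : nat -> list R}.
Hypothesis F_rank : rank Fam F (S l).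
Hypothesis F_dec : decomposition lt Fam n r l F Fs root.
Hypothesis cs_injective : forall i j, i < n (S l) -> j < n (S l) -> cs i = cs j -> i = j.
Hypothesis cs_sorted : forall {i}, i < n (S l) -> StronglySorted lt (cs i).
Hypothesis cs_incl : forall {i}, i < n (S l) -> incl (cs i) (Fs i).
Hypothesis cs_shift : forall i j x y, i < n (S l) ->
  nth_error (Fs 0) j = Some x -> nth_error (Fs i) j = Some y -> (In x (cs 0) <-> In y (cs i)).
Hypothesis aa_A : forall {i}, i < n (S l) -> A (aa i).
Hypothesis aa_code : forall {i}, i < n (S l) -> same_elements (aa i) (map code (cs i)).
Local Notation N := (n (S l)).

Lemma N_pos : 0 < N.
Proof. pose proof (n_ge2 l). lia. Qed.

Lemma aa_sorted {i} : i < N -> StronglySorted Rlt (aa i).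
Proof. intro Hi. apply Sorted_StronglySorted; [exact Rlt_trans|]. apply (A_shape (aa_A Hi)). Qed.

Lemma captured_related i p u v : i < N ->
  nth_error (aa 0) p = Some u -> nth_error (aa i) p = Some v ->
  exists j z y, nth_error (Fs 0) j = Some z /\ code z = u /\ nth_error (Fs i) j = Some y /\ code y = v.
Proof.
  intro Hi. pose proof N_pos as H0.
  assert (same_length : forall i i' j x, i < N -> i' < N -> nth_error (Fs i) j = Some x ->
                          exists y, nth_error (Fs i') j = Some y).
  { intros i0 i' j x Hi0 Hi'. apply nth_error_same_length.
    now rewrite (part_length F_dec Hi0), (part_length F_dec Hi'). }
  apply (StronglySorted_nth_error_related Rlt_irrefl Rlt_trans
           (fun u v => exists j z y, nth_error (Fs 0) j = Some z /\ code z = u /\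
                                     nth_error (Fs i) j = Some y /\ code y = v));
    auto using aa_sorted.
  - intros w Hw. apply (aa_code H0), in_map_iff in Hw as [z [<- Hz]].
    destruct (In_nth_error _ _ (cs_incl H0 z Hz)) as [j Ej].
    destruct (same_length 0 i j z H0 Hi Ej) as [y Ey].
    exists (code y). split; [|eauto 7].
    apply (aa_code Hi), in_map_iff. exists y. split; auto. now apply (cs_shift i j z y Hi Ej Ey).
  - intros w Hw. apply (aa_code Hi), in_map_iff in Hw as [y [<- Hy]].
    destruct (In_nth_error _ _ (cs_incl Hi y Hy)) as [j Ej].
    destruct (same_length i 0 j y Hi H0 Ej) as [z Ez].
    exists (code z). split; [|eauto 7].
    apply (aa_code H0), in_map_iff. exists z. split; auto. now apply (cs_shift i j z y Hi Ez Ej).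
  - intros w1 w2 w1' w2' (j & z & y & Ez & <- & Ey & <-) (j' & z' & y' & Ez' & <- & Ey' & <-).
    exact (code_lt_transfer (part_rank F_dec H0) (part_rank F_dec Hi) Ez Ez' Ey Ey').
Qed.

Lemma captured_same_position i i' p x y : i < N -> i' < N ->
  nth_error (aa i) p = Some x -> nth_error (aa i') p = Some y ->
  exists j z y1 y2, nth_error (Fs 0) j = Some z /\ nth_error (aa 0) p = Some (code z) /\
    nth_error (Fs i) j = Some y1 /\ code y1 = x /\ nth_error (Fs i') j = Some y2 /\ code y2 = y.
Proof.
  intros Hi Hi' Ex Ey. pose proof N_pos as H0.
  destruct (nth_error_same_length (aa i) (aa 0) p x) as [u Eu]; auto.
  { now rewrite (proj1 (A_shape (aa_A Hi))), (proj1 (A_shape (aa_A H0))). }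
  destruct (captured_related i p u x Hi Eu Ex) as (j & z & y1 & Ez & <- & Ey1 & Hy1).
  destruct (captured_related i' p (code z) y Hi' Eu Ey) as (j' & z' & y2 & Ez' & Hz' & Ey2 & Hy2).
  apply code_injective in Hz' as ->.
  assert (j' = j) as ->.
  { apply (proj1 (NoDup_nth_error (Fs 0)) (rank_NoDup (part_rank F_dec H0))); [apply nth_error_Some|]; congruence. }
  exists j, z, y1, y2. repeat split; auto.
Qed.

Lemma captured_realizes t i1 i2 : i1 < N -> i2 < N -> aa i1 <> aa i2 ->
  (forall j z p, nth_error (Fs 0) j = Some z -> nth_error (aa 0) p = Some (code z) ->
     Nat.testbit i1 j = t p /\ Nat.testbit i2 j = negb (t p)) ->
  realizes K t (aa i1) (aa i2).
Proof.
  intros Hi1 Hi2 Hne Hbits p x y _ Ex Ey.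
  destruct (captured_same_position i1 i2 p x y Hi1 Hi2 Ex Ey)
    as (j & z & y1 & y2 & Ez & Ep & Ey1 & <- & Ey2 & <-).
  assert (Hj : r (S l) <= j).
  { destruct (Nat.lt_ge_cases j (r (S l))) as [Hlt|]; auto. exfalso.
    rewrite (nth_error_part_low F_rank F_dec i1 j Hi1 Hlt) in Ey1.
    rewrite (nth_error_part_low F_rank F_dec i2 j Hi2 Hlt), Ey1 in Ey2. injection Ey2 as <-.
    apply (A_disjoint (aa_A Hi1) (aa_A Hi2) Hne (code y1)); eapply nth_error_In; eauto. }
  destruct (Hbits j z p Ez Ep) as [B1 B2].
  destruct (t p); simpl in B2.
  - exact (code_lt_of_block_bits F_rank F_dec Hi1 Hi2 Hj Ey1 Ey2 B1 B2).
  - exact (code_lt_of_block_bits F_rank F_dec Hi2 Hi1 Hj Ey2 Ey1 B2 B1).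
Qed.

Definition pattern_bit (t : nat -> bool) (j : nat) : Prop :=
  exists z p, nth_error (Fs 0) j = Some z /\ nth_error (aa 0) p = Some (code z) /\ t p = true.

Lemma pattern_bit_iff t j z p : nth_error (Fs 0) j = Some z -> nth_error (aa 0) p = Some (code z) ->
  (pattern_bit t j <-> t p = true).
Proof.
  intros Ez Ep. split; [|now exists z, p].
  intros (z' & p' & Ez' & Ep' & Tp'). rewrite Ez in Ez'. injection Ez' as <-.
  enough (p' = p) by congruence.
  apply (proj1 (NoDup_nth_error (aa 0)) (StronglySorted_NoDup Rlt_irrefl (aa_sorted N_pos)));
    [apply nth_error_Some|]; congruence.
Qed.

Lemma captured_entangled_pair t : exists a b, A a /\ A b /\ a <> b /\ realizes K t a b.
Proof.
  destruct (binary_code_exists (m l) (pattern_bit t)) as [i1 [Hi1 B1]].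
  destruct (binary_code_exists (m l) (fun j => ~ pattern_bit t j)) as [i2 [Hi2 B2]].
  pose proof (n_large l). pose proof (m_pos l) as Hm.
  assert (Hne : i1 <> i2) by (intros <-; specialize (B1 0 Hm); specialize (B2 0 Hm); tauto).
  assert (Haa : aa i1 <> aa i2).
  { intro E. apply Hne, cs_injective; try lia.
    apply map_code_injective; try (apply cs_sorted; lia).
    intro y. rewrite <- (aa_code (i := i1) ltac:(lia) y), <- (aa_code (i := i2) ltac:(lia) y), E.
    reflexivity. }
  exists (aa i1), (aa i2). split; [apply aa_A; lia|split; [apply aa_A; lia|split; [exact Haa|]]].
  apply captured_realizes; auto; try lia.
  intros j z p Ez Ep. pose proof (pattern_bit_iff t j z p Ez Ep) as Hp.
  pose proof (nth_error_rank_lt (part_rank F_dec N_pos) Ez) as Hj.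
  specialize (B1 j Hj). specialize (B2 j Hj).
  destruct (t p); simpl; split; apply eq_iff_eq_true; intuition discriminate.
Qed.

End CapturedFamily.

Lemma code_range_k_entangled K : k_entangled code_range K.
Proof.
  intros A A_shape A_disjoint A_uncountable t.
  set (Sf s := StronglySorted lt s /\ exists a, A a /\ same_elements a (map code s)).
  assert (Sf_uncountable : ~ countable_pred Sf).
  { intro HSf. apply A_uncountable.
    apply (countable_pred_transfer A Sf (fun s a => same_elements a (map code s))); auto.
    - exact (inhabits []).
    - intros a Ha. destruct (code_sorted_preimage a (proj2 (proj2 (A_shape a Ha)))) as [s [Hs Es]].
      exists s. split; auto. split; eauto.
    - intros s a a' Ha Ha' E E'.
      apply (StronglySorted_ext Rlt_irrefl Rlt_trans);
        [apply Sorted_StronglySorted; [exact Rlt_trans|apply A_shape; auto]..|].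
      intro y. rewrite (E y), (E' y). reflexivity. }
  destruct (capturing Sf (fun s Hs => StronglySorted_Sorted (proj1 Hs)) Sf_uncountable 0)
    as (l & cs & F & _ & cs_Sf & F_rank & cs_injective & Fs & root & F_dec & cs_incl & _ & cs_shift).
  destruct (choice (fun i a => i < n (S l) -> A a /\ same_elements a (map code (cs i)))) as [aa Haa].
  { intro i. destruct (Nat.lt_ge_cases i (n (S l))) as [Hi|Hi]; [|exists []; lia].
    destruct (cs_Sf i Hi) as [_ [a Ha]]. now exists a. }
  apply (captured_entangled_pair A_shape A_disjoint F_rank F_dec cs_injective (aa := aa)); auto.
  - intros i Hi. exact (proj1 (cs_Sf i Hi)).
  - intros i Hi. exact (proj1 (Haa i Hi)).
  - intros i Hi. exact (proj2 (Haa i Hi)).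
Qed.

End ConstructionScheme.

Theorem mainTheorem7 (W : Type) (lt : W -> W -> Prop) :
  is_omega1 lt -> FCA lt -> exists E : R -> Prop, entangled E.
Proof.
  intros (lt_irrefl & lt_trans & lt_total & _ & W_uncountable & _) fca.
  destruct (fca tau_m tau_n tau_r tau_is_type) as (Fam & scheme & capturing).
  exists (code_range W Fam tau_m tau_r). split.
  - eapply code_range_uncountable; eauto.
  - intro K. eapply code_range_k_entangled; eauto using tau_is_type, tau_n_large.
Qed.
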